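(* Let $f:\Omega_D\to\mathbb{O}$ be a slice function of class $C^1$. Then $f'_s(x)=\frac16\,\mathrm{Im}(x)^{-1}\big(\Gamma(f)(x)\big)$ for every $x\in\Omega_D\setminus\mathbb{R}$.
   Context: Octonions $\mathbb{O}=\mathbb{H}+\ell\mathbb{H}$ with product $(a+\ell b)(c+\ell d)=(ac-d\bar b)+\ell(\bar a d+cb)$, conjugation $\overline{a+\ell b}=\bar a-\ell b$; real basis $(1,e_1,\dots,e_7)=(1,i,j,k,\ell,\ell i,\ell j,\ell k)$, $x=x_0+\sum_{h=1}^7x_he_h$, $\mathrm{Im}(x)=\sum_{h=1}^7x_he_h$. $\mathbb{S}=\{I\in\mathbb{O}:I^2=-1\}$. $D\subset\mathbb{R}^2$ non-empty open, invariant under $(\alpha,\beta)\mapsto(\alpha,-\beta)$, $\Omega_D=\{\alpha+\beta I:(\alpha,\beta)\in D,I\in\mathbb{S}\}$, assumed connected. A slice function $f$ is one of the form $f(\alpha+\beta I)=F_1(\alpha,\beta)+IF_2(\alpha,\beta)$ for a (unique) stem function $(F_1,F_2):D\to\mathbb{O}^2$, $F_1$ even and $F_2$ odd in $\beta$. The spherical derivative is $f'_s:\Omega_D\setminus\mathbb{R}\to\mathbb{O}$, $f'_s(\alpha+\beta I)=F_2(\alpha,\beta)/\beta$. For $m<n$ in $\{1,\dots,7\}$, $L_{mn}=x_m\frac{\partial}{\partial x_n}-x_n\frac{\partial}{\partial x_m}$, and the spherical Dirac operator on $C^1$ functions is $\Gamma(f)(x)=-\sum_{1\le m<n\le7}e_m\big(e_n\,L_{mn}(f)(x)\big)$.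 *)

From Stdlib Require Import Reals.
From Coquelicot Require Import Coquelicot.
Open Scope R_scope.

(* Quaternions a = q0 + q1 i + q2 j + q3 k *)
Record quat := Quat { q0 : R; q1 : R; q2 : R; q3 : R }.

Definition qadd (a b : quat) : quat :=
  Quat (q0 a + q0 b) (q1 a + q1 b) (q2 a + q2 b) (q3 a + q3 b).
Definition qopp (a : quat) : quat := Quat (- q0 a) (- q1 a) (- q2 a) (- q3 a).
Definition qconj (a : quat) : quat := Quat (q0 a) (- q1 a) (- q2 a) (- q3 a).
(* Hamilton product, i j = k, j k = i, k i = j *)
Definition qmul (a b : quat) : quat :=
  Quat (q0 a * q0 b - q1 a * q1 b - q2 a * q2 b - q3 a * q3 b)
       (q0 a * q1 b + q1 a * q0 b + q2 a * q3 b - q3 a * q2 b)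
       (q0 a * q2 b - q1 a * q3 b + q2 a * q0 b + q3 a * q1 b)
       (q0 a * q3 b + q1 a * q2 b - q2 a * q1 b + q3 a * q0 b).

(* Octonions O = H + l H : x = oa x + l (ob x) *)
Record oct := Oct { oa : quat; ob : quat }.

Definition oadd (x y : oct) : oct := Oct (qadd (oa x) (oa y)) (qadd (ob x) (ob y)).
Definition oopp (x : oct) : oct := Oct (qopp (oa x)) (qopp (ob x)).
Definition osub (x y : oct) : oct := oadd x (oopp y).
(* (a + l b)(c + l d) = (ac - d conj(b)) + l (conj(a) d + c b) *)
Definition omul (x y : oct) : oct :=
  Oct (qadd (qmul (oa x) (oa y)) (qopp (qmul (ob y) (qconj (ob x)))))
      (qadd (qmul (qconj (oa x)) (ob y)) (qmul (oa y) (ob x))).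
Definition oconj (x : oct) : oct := Oct (qconj (oa x)) (qopp (ob x)).

(* real coordinates w.r.t. (1,i,j,k,l,li,lj,lk) *)
Definition mkoct (x0 x1 x2 x3 x4 x5 x6 x7 : R) : oct :=
  Oct (Quat x0 x1 x2 x3) (Quat x4 x5 x6 x7).
Definition coord (x : oct) (h : nat) : R :=
  match h with
  | 0%nat => q0 (oa x) | 1%nat => q1 (oa x) | 2%nat => q2 (oa x) | 3%nat => q3 (oa x)
  | 4%nat => q0 (ob x) | 5%nat => q1 (ob x) | 6%nat => q2 (ob x) | 7%nat => q3 (ob x)
  | _ => 0
  end.
Definition of_coords (c : nat -> R) : oct :=
  mkoct (c 0%nat) (c 1%nat) (c 2%nat) (c 3%nat) (c 4%nat) (c 5%nat) (c 6%nat) (c 7%nat).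

Definition ebasis (h : nat) : oct := of_coords (fun k => if Nat.eqb k h then 1 else 0).

Definition oreal (r : R) : oct := mkoct r 0 0 0 0 0 0 0.
Definition oscale (r : R) (x : oct) : oct := of_coords (fun k => r * coord x k).
Definition oone : oct := oreal 1.

Definition oIm (x : oct) : oct := of_coords (fun k => if Nat.eqb k 0 then 0 else coord x k).

Definition onorm2 (x : oct) : R :=
  coord x 0 ^ 2 + coord x 1 ^ 2 + coord x 2 ^ 2 + coord x 3 ^ 2
  + coord x 4 ^ 2 + coord x 5 ^ 2 + coord x 6 ^ 2 + coord x 7 ^ 2.
Definition onorm (x : oct) : R := sqrt (onorm2 x).
Definition oinv (x : oct) : oct := oscale (/ onorm2 x) (oconj x).

Definition sphereS (I : oct) : Prop := omul I I = oopp oone.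

Definition openR2 (D : R -> R -> Prop) : Prop :=
  forall a b, D a b -> exists eps, 0 < eps /\
    forall a' b', Rabs (a' - a) < eps -> Rabs (b' - b) < eps -> D a' b'.
Definition openO (U : oct -> Prop) : Prop :=
  forall x, U x -> exists eps, 0 < eps /\ forall y, onorm (osub y x) < eps -> U y.
Definition connectedO (S : oct -> Prop) : Prop :=
  forall U V : oct -> Prop, openO U -> openO V ->
    (forall x, S x -> U x \/ V x) ->
    (exists x, S x /\ U x) -> (exists x, S x /\ V x) ->
    exists x, S x /\ U x /\ V x.

Definition OmegaD (D : R -> R -> Prop) (x : oct) : Prop :=
  exists a b I, D a b /\ sphereS I /\ x = oadd (oreal a) (oscale b I).

Definition is_real_oct (x : oct) : Prop := exists r, x = oreal r.

Definition stem_of (D : R -> R -> Prop) (f : oct -> oct) (F1 F2 : R -> R -> oct) : Prop :=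
  (forall a b, D a b -> F1 a (- b) = F1 a b) /\
  (forall a b, D a b -> F2 a (- b) = oopp (F2 a b)) /\
  (forall a b I, D a b -> sphereS I ->
     f (oadd (oreal a) (oscale b I)) = oadd (F1 a b) (omul I (F2 a b))).

Definition is_slice (D : R -> R -> Prop) (f : oct -> oct) : Prop :=
  exists F1 F2, stem_of D f F1 F2.

Definition opartial (h : nat) (f : oct -> oct) (x : oct) : oct :=
  of_coords (fun k => Derive (fun t => coord (f (oadd x (oscale t (ebasis h)))) k) 0).

Definition continuous_on_O (S : oct -> Prop) (g : oct -> oct) : Prop :=
  forall x, S x -> forall eps, 0 < eps -> exists delta, 0 < delta /\
    forall y, S y -> onorm (osub y x) < delta -> onorm (osub (g y) (g x)) < eps.

Definition C1_on (S : oct -> Prop) (f : oct -> oct) : Prop :=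
  (forall x, S x -> forall h k, (h < 8)%nat -> (k < 8)%nat ->
      ex_derive (fun t => coord (f (oadd x (oscale t (ebasis h)))) k) 0) /\
  (forall h, (h < 8)%nat -> continuous_on_O S (opartial h f)).

Definition Lop (m n : nat) (f : oct -> oct) (x : oct) : oct :=
  osub (oscale (coord x m) (opartial n f x)) (oscale (coord x n) (opartial m f x)).

Fixpoint osum (n : nat) (g : nat -> oct) : oct :=
  match n with
  | 0%nat => oreal 0
  | S n' => oadd (osum n' g) (g n')
  end.

Definition Gamma (f : oct -> oct) (x : oct) : oct :=
  oopp (osum 8 (fun m => osum 8 (fun n =>
    if (Nat.ltb 0 m && Nat.ltb m n)%bool
    then omul (ebasis m) (omul (ebasis n) (Lop m n f x))
    else oreal 0))).

From Pilot Require Import Defs.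
From Stdlib Require Import Reals Lra Lia.
From Coquelicot Require Import Coquelicot.
Open Scope R_scope.

(* Fix x = a + b I with b <> 0 and put G = F2(a,b) / b.  Rotating I by an angle t in a
   coordinate plane (e_m, e_n) keeps it in S, and along the curve a + b I(t) the function f
   equals F1(a,b) + I(t) F2(a,b).  Differentiating at t = 0 once through this formula and once
   by the chain rule in the plane (where C^1 gives differentiability) yields
   L_mn f(x) = (x_m e_n - x_n e_m) G.  In Gamma(f)(x), alternativity and the Moufang identity
   then give 6 Im(x) G, and Im(x)^-1 (Im(x) G) = G. *)

Ltac hcases h := destruct h as [|[|[|[|[|[|[|[|h]]]]]]]].

Lemma coord_oadd u v h : coord (oadd u v) h = coord u h + coord v h.
Proof. hcases h; simpl; ring. Qed.

Lemma coord_osub u v h : coord (osub u v) h = coord u h - coord v h.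
Proof. hcases h; simpl; ring. Qed.

Lemma coord_oscale r u h : coord (oscale r u) h = r * coord u h.
Proof. hcases h; simpl; ring. Qed.

Lemma coord_oreal r h : coord (oreal r) h = if Nat.eqb h 0 then r else 0.
Proof. hcases h; reflexivity. Qed.

Lemma coord_of_coords c h : (h < 8)%nat -> coord (of_coords c) h = c h.
Proof. intro Hh; hcases h; try reflexivity; lia. Qed.

Lemma coord_ebasis j h : (h < 8)%nat -> coord (ebasis j) h = if Nat.eqb h j then 1 else 0.
Proof. intro Hh; apply coord_of_coords, Hh. Qed.

Lemma oct_ext u v : (forall h, (h < 8)%nat -> coord u h = coord v h) -> u = v.
Proof.
  destruct u as [[? ? ? ?] [? ? ? ?]], v as [[? ? ? ?] [? ? ? ?]]; intro H.
  pose proof (H 0%nat); pose proof (H 1%nat); pose proof (H 2%nat); pose proof (H 3%nat);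
  pose proof (H 4%nat); pose proof (H 5%nat); pose proof (H 6%nat); pose proof (H 7%nat).
  simpl in *; f_equal; f_equal; auto with arith.
Qed.

Lemma oscale_oscale r s u : oscale r (oscale s u) = oscale (r * s) u.
Proof. apply oct_ext; intros; rewrite !coord_oscale; ring. Qed.

Lemma osum_ext n g g' : (forall i, (i < n)%nat -> g i = g' i) -> osum n g = osum n g'.
Proof.
  induction n as [|n IH]; intro H; simpl; [reflexivity |].
  rewrite IH, H; [reflexivity | lia | intros; apply H; lia].
Qed.

Lemma mkoct_eq x0 x1 x2 x3 x4 x5 x6 x7 y0 y1 y2 y3 y4 y5 y6 y7 :
  x0 = y0 -> x1 = y1 -> x2 = y2 -> x3 = y3 -> x4 = y4 -> x5 = y5 -> x6 = y6 -> x7 = y7 ->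
  mkoct x0 x1 x2 x3 x4 x5 x6 x7 = mkoct y0 y1 y2 y3 y4 y5 y6 y7.
Proof. intros; subst; reflexivity. Qed.

(* Left multiplication by e_n (1 <= n <= 7), read off the multiplication table; rewriting
   with [omul_ebasis_l] leaves [ring] with signed permutations of coordinates only. *)
Definition emul (n : nat) (y : oct) : oct :=
  match n with
  | 1%nat => mkoct (- coord y 1) (coord y 0) (- coord y 3) (coord y 2)
                   (coord y 5) (- coord y 4) (coord y 7) (- coord y 6)
  | 2%nat => mkoct (- coord y 2) (coord y 3) (coord y 0) (- coord y 1)
                   (coord y 6) (- coord y 7) (- coord y 4) (coord y 5)
  | 3%nat => mkoct (- coord y 3) (- coord y 2) (coord y 1) (coord y 0)
                   (coord y 7) (coord y 6) (- coord y 5) (- coord y 4)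
  | 4%nat => mkoct (- coord y 4) (- coord y 5) (- coord y 6) (- coord y 7)
                   (coord y 0) (coord y 1) (coord y 2) (coord y 3)
  | 5%nat => mkoct (- coord y 5) (coord y 4) (coord y 7) (- coord y 6)
                   (- coord y 1) (coord y 0) (coord y 3) (- coord y 2)
  | 6%nat => mkoct (- coord y 6) (- coord y 7) (coord y 4) (coord y 5)
                   (- coord y 2) (- coord y 3) (coord y 0) (coord y 1)
  | 7%nat => mkoct (- coord y 7) (coord y 6) (- coord y 5) (coord y 4)
                   (- coord y 3) (coord y 2) (- coord y 1) (coord y 0)
  | _ => y
  end.

Ltac oct_unfold :=
  cbv beta iota zeta delta [Defs.q0 Defs.q1 Defs.q2 Defs.q3 Defs.oa Defs.ob osum Nat.ltb
    Nat.leb Nat.eqb andb omul oconj oadd oopp osub oscale of_coords mkoct oIm qmul qadd qopp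
    qconj oreal oone coord ebasis emul onorm2].

(* [mkoct_eq] rather than [f_equal]: the latter attempts conversion on real subterms. *)
Ltac oct_ring :=
  repeat match goal with o : oct |- _ => destruct o as [[? ? ? ?] [? ? ? ?]] end;
  oct_unfold; apply mkoct_eq; ring.

Lemma omul_ebasis_l n y : (1 <= n <= 7)%nat -> omul (ebasis n) y = emul n y.
Proof. intro Hn; hcases n; try lia; oct_ring. Qed.

Lemma omul_oaddl p q y : omul (oadd p q) y = oadd (omul p y) (omul q y).
Proof. oct_ring. Qed.

Lemma omul_osubl p q y : omul (osub p q) y = osub (omul p y) (omul q y).
Proof. oct_ring. Qed.

Lemma omul_oscalel r p y : omul (oscale r p) y = oscale r (omul p y).
Proof. oct_ring. Qed.

Lemma omul_oscaler r p y : omul p (oscale r y) = oscale r (omul p y).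
Proof. oct_ring. Qed.

Lemma omul_oconj_omul y z : omul (oconj y) (omul y z) = oscale (onorm2 y) z.
Proof. oct_ring. Qed.

Lemma omul_oinv_omul y z : onorm2 y <> 0 -> omul (oinv y) (omul y z) = z.
Proof.
  intro Hy. unfold oinv. rewrite omul_oscalel, omul_oconj_omul, oscale_oscale.
  apply oct_ext; intros; rewrite coord_oscale; field; exact Hy.
Qed.

Lemma onorm2_oscale r y : onorm2 (oscale r y) = r ^ 2 * onorm2 y.
Proof. unfold onorm2; rewrite !coord_oscale; ring. Qed.

Lemma coord_le_onorm y c : (c < 8)%nat -> Rabs (coord y c) <= onorm y.
Proof.
  intro Hc. unfold onorm. rewrite <- (sqrt_pow2 (Rabs (coord y c))) by apply Rabs_pos.
  apply sqrt_le_1_alt. rewrite pow2_abs. unfold onorm2.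
  pose proof (pow2_ge_0 (coord y 0)); pose proof (pow2_ge_0 (coord y 1));
  pose proof (pow2_ge_0 (coord y 2)); pose proof (pow2_ge_0 (coord y 3));
  pose proof (pow2_ge_0 (coord y 4)); pose proof (pow2_ge_0 (coord y 5));
  pose proof (pow2_ge_0 (coord y 6)); pose proof (pow2_ge_0 (coord y 7)).
  hcases c; try lia; lra.
Qed.

Lemma sphereS_iff I : sphereS I <-> coord I 0 = 0 /\ onorm2 I = 1.
Proof.
  unfold sphereS, onorm2. destruct I as [[r0 r1 r2 r3] [r4 r5 r6 r7]].
  cbn [coord Defs.oa Defs.ob Defs.q0 Defs.q1 Defs.q2 Defs.q3]. split.
  - intro H. injection H as E0 E1 E2 E3 E4 E5 E6 E7.
    (* the imaginary part of I^2 is 2 r0 Im(I), so r0 <> 0 would force I = r0 *)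
    assert (r0 = 0).
    { destruct (Req_dec r0 0) as [|Hr0]; [assumption | exfalso].
      assert (r1 = 0) by nra; assert (r2 = 0) by nra; assert (r3 = 0) by nra;
      assert (r4 = 0) by nra; assert (r5 = 0) by nra; assert (r6 = 0) by nra;
      assert (r7 = 0) by nra; subst; nra. }
    subst; split; [reflexivity | nra].
  - intros [-> H]. oct_unfold. apply mkoct_eq; nra.
Qed.

Definition plane (y : oct) (h k : nat) (u v : R) : oct :=
  oadd (oadd y (oscale u (ebasis h))) (oscale v (ebasis k)).

Lemma coord_plane y h k u v c : (c < 8)%nat ->
  coord (plane y h k u v) c
  = coord y c + u * (if Nat.eqb c h then 1 else 0) + v * (if Nat.eqb c k then 1 else 0).
Proof.
  intro Hc; unfold plane.
  rewrite !coord_oadd, !coord_oscale, !coord_ebasis by exact Hc; reflexivity.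
Qed.

Lemma plane_00 y h k : plane y h k 0 0 = y.
Proof. apply oct_ext; intros; rewrite coord_plane by assumption; ring. Qed.

Lemma plane_0l y h k v : plane y h k 0 v = oadd y (oscale v (ebasis k)).
Proof.
  apply oct_ext; intros; rewrite coord_plane, coord_oadd, coord_oscale, coord_ebasis by assumption.
  ring.
Qed.

Lemma plane_shift y h k u v s :
  oadd (plane y h k u v) (oscale s (ebasis h)) = plane y h k (u + s) v.
Proof.
  apply oct_ext; intros; rewrite coord_oadd, coord_oscale, !coord_plane, coord_ebasis by assumption.
  ring.
Qed.

Lemma onorm2_plane y h k u v : (h < 8)%nat -> (k < 8)%nat -> h <> k ->
  onorm2 (plane y h k u v) = onorm2 y + 2 * (u * coord y h + v * coord y k) + u ^ 2 + v ^ 2.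
Proof.
  intros Hh Hk Hhk. unfold plane.
  hcases h; try lia; hcases k; try lia; oct_unfold; ring.
Qed.

Lemma onorm_plane_sub y h k u v : (h < 8)%nat -> (k < 8)%nat -> h <> k ->
  onorm (osub (plane y h k u v) y) <= Rabs u + Rabs v.
Proof.
  intros Hh Hk Hhk.
  assert (Hsq : onorm2 (osub (plane y h k u v) y) = u ^ 2 + v ^ 2).
  { unfold plane; hcases h; try lia; hcases k; try lia; oct_unfold; ring. }
  pose proof (Rabs_pos u); pose proof (Rabs_pos v).
  unfold onorm. rewrite Hsq, <- (sqrt_pow2 (Rabs u + Rabs v)) by lra.
  apply sqrt_le_1_alt. rewrite <- (pow2_abs u), <- (pow2_abs v). nra.
Qed.

Lemma Rabs_between x u z : Rmin x u <= z <= Rmax x u -> Rabs (z - x) <= Rabs (u - x).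
Proof.
  unfold Rmin, Rmax; destruct (Rle_dec x u); intro Hz;
    unfold Rabs; repeat destruct Rcase_abs; lra.
Qed.

Lemma is_derive_linear_bound (phi : R -> R) y l (eps : posreal) :
  is_derive phi y l -> exists delta : posreal, forall v, Rabs (v - y) < delta ->
    Rabs (phi v - phi y - l * (v - y)) <= eps * Rabs (v - y).
Proof.
  intro H. apply is_derive_Reals in H. destruct (H eps (cond_pos eps)) as [delta Hd].
  exists delta. intros v Hv. destruct (Req_dec v y) as [-> | Hvy].
  - replace (phi y - phi y - l * (y - y)) with 0 by ring. rewrite Rminus_diag, !Rabs_R0. lra.
  - assert (Hh : v - y <> 0) by lra.
    specialize (Hd (v - y) Hh Hv). replace (y + (v - y)) with v in Hd by ring.
    replace (phi v - phi y - l * (v - y)) with (((phi v - phi y) / (v - y) - l) * (v - y))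
      by (field; exact Hh).
    rewrite Rabs_mult. apply Rmult_le_compat_r; [apply Rabs_pos | lra].
Qed.

Lemma differentiable_pt_lim_of_partials (g d1 : R -> R -> R) x y l2 :
  locally_2d (fun u v => is_derive (fun z => g z v) u (d1 u v)) x y ->
  continuity_2d_pt d1 x y ->
  is_derive (fun z => g x z) y l2 ->
  differentiable_pt_lim g x y (d1 x y) l2.
Proof.
  intros [d0 Hd1] Hc H2 eps.
  assert (Heps2 : 0 < eps / 2) by (pose proof (cond_pos eps); lra).
  destruct (Hc (mkposreal _ Heps2)) as [dc Hdc].
  destruct (is_derive_linear_bound _ _ _ (mkposreal _ Heps2) H2) as [dv Hdv].
  assert (Hdelta : 0 < Rmin d0 (Rmin dc dv))
    by (repeat apply Rmin_glb_lt; apply cond_pos).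
  exists (mkposreal _ Hdelta). intros u v Hu Hv; simpl in Hu, Hv.
  pose proof (Rmin_l d0 (Rmin dc dv)); pose proof (Rmin_r d0 (Rmin dc dv)).
  pose proof (Rmin_l dc dv); pose proof (Rmin_r dc dv).
  destruct (MVT_gen (fun z => g z v) x u (fun z => d1 z v)) as [c [Hcin Hmvt]].
  { intros z Hz. apply Hd1; [| lra].
    pose proof (Rabs_between x u z ltac:(lra)); lra. }
  { intros z Hz. apply continuity_pt_filterlim, (ex_derive_continuous (fun z => g z v)).
    eexists. apply Hd1; [| lra]. pose proof (Rabs_between x u z Hz); lra. }
  pose proof (Rabs_between x u c Hcin) as Hcx.
  specialize (Hdc c v ltac:(lra) ltac:(lra)); simpl in Hdc.
  specialize (Hdv v ltac:(lra)); simpl in Hdv.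
  replace (g u v - g x y - (d1 x y * (u - x) + l2 * (v - y)))
    with ((d1 c v - d1 x y) * (u - x) + (g x v - g x y - l2 * (v - y))) by lra.
  eapply Rle_trans; [apply Rabs_triang |]. rewrite Rabs_mult.
  assert (Rabs (d1 c v - d1 x y) * Rabs (u - x) <= eps / 2 * Rabs (u - x))
    by (apply Rmult_le_compat_r; [apply Rabs_pos | lra]).
  pose proof (Rmax_l (Rabs (u - x)) (Rabs (v - y))).
  pose proof (Rmax_r (Rabs (u - x)) (Rabs (v - y))).
  pose proof (cond_pos eps). nra.
Qed.

Lemma is_derive_translate (phi : R -> R) u l :
  is_derive phi 0 l -> is_derive (fun z => phi (z - u)) u l.
Proof.
  intro H. rewrite <- (scal_one l). apply (is_derive_comp phi (fun z => z - u)).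
  - rewrite Rminus_diag; exact H.
  - auto_derive; auto.
Qed.

Lemma is_derive_plane f y h k u v c : (c < 8)%nat ->
  ex_derive (fun t => coord (f (oadd (plane y h k u v) (oscale t (ebasis h)))) c) 0 ->
  is_derive (fun z => coord (f (plane y h k z v)) c) u (coord (opartial h f (plane y h k u v)) c).
Proof.
  intros Hc Hex. unfold opartial. rewrite coord_of_coords by exact Hc.
  apply Derive_correct, (is_derive_translate _ u) in Hex.
  eapply is_derive_ext; [| exact Hex]. intro z; cbv beta.
  rewrite plane_shift, Rplus_minus. reflexivity.
Qed.

Lemma differentiable_plane_of_C1 (S : oct -> Prop) f x h k c :
  C1_on S f -> locally_2d (fun u v => S (plane x h k u v)) 0 0 ->
  (h < 8)%nat -> (k < 8)%nat -> h <> k -> (c < 8)%nat ->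
  differentiable_pt_lim (fun u v => coord (f (plane x h k u v)) c) 0 0
    (coord (opartial h f x) c) (coord (opartial k f x) c).
Proof.
  intros [Hex Hcont] [d HS] Hh Hk Hhk Hc.
  assert (Hx : S x).
  { rewrite <- (plane_00 x h k). apply HS; rewrite Rminus_diag, Rabs_R0; apply cond_pos. }
  pattern (coord (opartial h f x) c); rewrite <- (plane_00 x h k) at 1.
  apply (differentiable_pt_lim_of_partials _ (fun u v => coord (opartial h f (plane x h k u v)) c)).
  - exists d. intros u v Hu Hv. apply is_derive_plane; [exact Hc |]. apply Hex; auto.
  - intro eps. destruct (Hcont h Hh x Hx eps (cond_pos eps)) as [delta [Hdelta Hclose]].
    assert (Hr : 0 < Rmin d (delta / 2)) by (apply Rmin_glb_lt; [apply cond_pos | lra]).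
    exists (mkposreal _ Hr). intros u v Hu Hv; simpl in Hu, Hv.
    pose proof (Rmin_l d (delta / 2)); pose proof (Rmin_r d (delta / 2)).
    rewrite Rminus_0_r in Hu, Hv. rewrite plane_00, <- coord_osub.
    eapply Rle_lt_trans; [apply coord_le_onorm, Hc |]. apply Hclose.
    + apply HS; rewrite Rminus_0_r; lra.
    + pose proof (onorm_plane_sub x h k u v Hh Hk Hhk); lra.
  - apply (is_derive_ext (fun t => coord (f (oadd x (oscale t (ebasis k)))) c)).
    + intro t; rewrite plane_0l; reflexivity.
    + unfold opartial. rewrite coord_of_coords by exact Hc. apply Derive_correct, Hex; auto.
Qed.

Lemma onorm2_nonneg y : 0 <= onorm2 y.
Proof.
  unfold onorm2.
  pose proof (pow2_ge_0 (coord y 0)); pose proof (pow2_ge_0 (coord y 1));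
  pose proof (pow2_ge_0 (coord y 2)); pose proof (pow2_ge_0 (coord y 3));
  pose proof (pow2_ge_0 (coord y 4)); pose proof (pow2_ge_0 (coord y 5));
  pose proof (pow2_ge_0 (coord y 6)); pose proof (pow2_ge_0 (coord y 7)).
  lra.
Qed.

Lemma OmegaD_of_imaginary D a Y :
  coord Y 0 = 0 -> 0 < onorm Y -> D a (onorm Y) -> OmegaD D (oadd (oreal a) Y).
Proof.
  intros HY0 HY HD. exists a, (onorm Y), (oscale (/ onorm Y) Y). split; [exact HD | split].
  - apply sphereS_iff. rewrite coord_oscale, HY0, onorm2_oscale. split; [ring |].
    unfold onorm in *. rewrite <- (sqrt_sqrt (onorm2 Y)) at 2 by apply onorm2_nonneg.
    field. lra.
  - rewrite oscale_oscale, Rinv_r by lra.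
    apply oct_ext; intros; rewrite !coord_oadd, coord_oscale; ring.
Qed.

Lemma OmegaD_near D a B : openR2 D -> D a B -> 0 < B ->
  exists r, 0 < r /\ forall Y, coord Y 0 = 0 -> Rabs (onorm2 Y - B ^ 2) < r ->
    OmegaD D (oadd (oreal a) Y).
Proof.
  intros Hop HD HB. destruct (Hop a B HD) as [eps [Heps Hball]].
  pose proof (Rmin_l eps B); pose proof (Rmin_r eps B).
  assert (Hm : 0 < Rmin eps B) by (apply Rmin_glb_lt; assumption).
  exists (B * Rmin eps B / 2). split; [nra |]. intros Y HY0 HY.
  pose proof (sqrt_pos (onorm2 Y)) as Hrho.
  pose proof (sqrt_sqrt _ (onorm2_nonneg Y)) as Hsq.
  fold (onorm Y) in Hrho, Hsq.
  (* from (rho - B) (rho + B) = rho^2 - B^2 and rho + B >= B *)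
  assert (Hclose : Rabs (onorm Y - B) < Rmin eps B / 2).
  { apply Rabs_def1; apply Rabs_def2 in HY; nra. }
  apply Rabs_def2 in Hclose.
  apply OmegaD_of_imaginary; [exact HY0 | lra |].
  apply Hball; [rewrite Rminus_diag, Rabs_R0; exact Heps | apply Rabs_def1; lra].
Qed.

Lemma OmegaD_plane_nbhd D a b I h k :
  openR2 D -> (forall a b, D a b -> D a (- b)) -> D a b -> sphereS I -> b <> 0 ->
  (1 <= h <= 7)%nat -> (1 <= k <= 7)%nat -> h <> k ->
  locally_2d (fun u v => OmegaD D (plane (oadd (oreal a) (oscale b I)) h k u v)) 0 0.
Proof.
  intros Hop Hsym HD HI Hb Hh Hk Hhk. apply sphereS_iff in HI as [HI0 HI1].
  set (B := Rabs b).
  assert (HB : 0 < B) by (apply Rabs_pos_lt, Hb).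
  assert (HDB : D a B) by (unfold B, Rabs; destruct Rcase_abs; auto).
  assert (HbB : b ^ 2 = B ^ 2) by (unfold B; rewrite pow2_abs; reflexivity).
  assert (HIle : forall c, (c < 8)%nat -> -1 <= coord I c <= 1).
  { intros c Hc. apply Rabs_le_between. rewrite <- sqrt_1, <- HI1. apply coord_le_onorm, Hc. }
  destruct (OmegaD_near D a B Hop HDB HB) as [r [Hr Hnear]].
  set (delta := Rmin 1 (r / (4 * B + 2))).
  assert (Hdelta : 0 < delta) by (apply Rmin_glb_lt; [lra | apply Rdiv_lt_0_compat; lra]).
  assert (Hd1 : delta <= 1) by apply Rmin_l.
  assert (Hdr : (4 * B + 2) * delta <= r).
  { assert (delta <= r / (4 * B + 2)) by apply Rmin_r.
    apply Rmult_le_reg_r with (/ (4 * B + 2)); [apply Rinv_0_lt_compat; lra |].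
    replace ((4 * B + 2) * delta * / (4 * B + 2)) with delta by (field; lra). lra. }
  exists (mkposreal _ Hdelta). intros u v Hu Hv; simpl in Hu, Hv.
  rewrite Rminus_0_r in Hu, Hv. apply Rabs_def2 in Hu, Hv.
  replace (plane (oadd (oreal a) (oscale b I)) h k u v)
    with (oadd (oreal a) (plane (oscale b I) h k u v))
    by (apply oct_ext; intros; rewrite !coord_oadd, !coord_plane, coord_oadd by assumption; ring).
  apply Hnear.
  - rewrite coord_plane, coord_oscale, HI0 by lia.
    destruct (Nat.eqb_spec 0 h), (Nat.eqb_spec 0 k); try lia; ring.
  - rewrite onorm2_plane, onorm2_oscale, !coord_oscale, HI1 by lia.
    pose proof (HIle h ltac:(lia)); pose proof (HIle k ltac:(lia)).
    assert (Hbd : - B <= b <= B) by (apply Rabs_le_between; unfold B; lra).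
    assert (Hw : Rabs (u * coord I h + v * coord I k) <= 2 * delta) by (apply Rabs_le; nra).
    apply Rabs_le_between in Hw.
    apply Rabs_def1; nra.
Qed.

Definition rotation (I : oct) (m n : nat) (t : R) : oct :=
  plane I m n ((cos t - 1) * coord I m - sin t * coord I n)
              ((cos t - 1) * coord I n + sin t * coord I m).

Lemma sphereS_rotation I m n t : sphereS I ->
  (1 <= m <= 7)%nat -> (1 <= n <= 7)%nat -> m <> n -> sphereS (rotation I m n t).
Proof.
  rewrite !sphereS_iff. intros [HI0 HI1] Hm Hn Hmn. unfold rotation. split.
  - rewrite coord_plane, HI0 by lia.
    destruct (Nat.eqb_spec 0 m), (Nat.eqb_spec 0 n); try lia; ring.
  - rewrite onorm2_plane, HI1 by lia. pose proof (sin2_cos2 t) as Hsc; unfold Rsqr in Hsc.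
    transitivity (1 + (coord I m ^ 2 + coord I n ^ 2) * (sin t * sin t + cos t * cos t - 1));
      [ring | rewrite Hsc; ring].
Qed.

Lemma slice_rotation_plane a b I m n t :
  oadd (oreal a) (oscale b (rotation I m n t))
  = plane (oadd (oreal a) (oscale b I)) m n
      (b * ((cos t - 1) * coord I m - sin t * coord I n))
      (b * ((cos t - 1) * coord I n + sin t * coord I m)).
Proof.
  apply oct_ext; intros; unfold rotation.
  rewrite coord_oadd, coord_oscale, !coord_plane, coord_oadd, coord_oscale by assumption; ring.
Qed.

Lemma is_derive_slice_rotation D f F1 F2 a b I m n c :
  stem_of D f F1 F2 -> D a b -> sphereS I ->
  (1 <= m <= 7)%nat -> (1 <= n <= 7)%nat -> m <> n ->
  is_derive (fun t => coord (f (oadd (oreal a) (oscale b (rotation I m n t)))) c) 0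
    (coord (omul (osub (oscale (coord I m) (ebasis n)) (oscale (coord I n) (ebasis m)))
                 (F2 a b)) c).
Proof.
  intros [_ [_ Hf]] HD HI Hm Hn Hmn.
  apply (is_derive_ext (fun t => coord (F1 a b) c + (coord (omul I (F2 a b)) c
    + ((cos t - 1) * coord I m - sin t * coord I n) * coord (omul (ebasis m) (F2 a b)) c
    + ((cos t - 1) * coord I n + sin t * coord I m) * coord (omul (ebasis n) (F2 a b)) c))).
  - intro t. rewrite Hf by auto using sphereS_rotation. unfold rotation, plane.
    rewrite !omul_oaddl, !omul_oscalel, !coord_oadd, !coord_oscale. reflexivity.
  - rewrite omul_osubl, !omul_oscalel, coord_osub, !coord_oscale.
    auto_derive; [auto | rewrite sin_0, cos_0; ring].
Qed.

Lemma Lop_slice D f F1 F2 a b I m n :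
  openR2 D -> (forall a b, D a b -> D a (- b)) -> C1_on (OmegaD D) f -> stem_of D f F1 F2 ->
  D a b -> sphereS I -> b <> 0 -> (1 <= m <= 7)%nat -> (1 <= n <= 7)%nat -> m <> n ->
  let x := oadd (oreal a) (oscale b I) in
  Lop m n f x
  = omul (osub (oscale (coord x m) (ebasis n)) (oscale (coord x n) (ebasis m)))
         (oscale (/ b) (F2 a b)).
Proof.
  intros Hop Hsym HC1 Hstem HD HI Hb Hm Hn Hmn x.
  assert (Hx : forall j, (1 <= j)%nat -> coord x j = b * coord I j).
  { intros j Hj. unfold x. rewrite coord_oadd, coord_oreal, coord_oscale.
    destruct (Nat.eqb_spec j 0); [lia | ring]. }
  apply oct_ext; intros c Hc.
  set (p := fun t => b * ((cos t - 1) * coord I m - sin t * coord I n)).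
  set (q := fun t => b * ((cos t - 1) * coord I n + sin t * coord I m)).
  assert (Hp : derivable_pt_lim p 0 (- (b * coord I n)))
    by (apply is_derive_Reals; unfold p; auto_derive; [auto | rewrite sin_0, cos_0; ring]).
  assert (Hq : derivable_pt_lim q 0 (b * coord I m))
    by (apply is_derive_Reals; unfold q; auto_derive; [auto | rewrite sin_0, cos_0; ring]).
  assert (Hdiff : differentiable_pt_lim (fun u v => coord (f (plane x m n u v)) c) (p 0) (q 0)
                    (coord (opartial m f x) c) (coord (opartial n f x) c)).
  { replace (p 0) with 0 by (unfold p; rewrite sin_0, cos_0; ring).
    replace (q 0) with 0 by (unfold q; rewrite sin_0, cos_0; ring).
    apply (differentiable_plane_of_C1 (OmegaD D)); try lia; [exact HC1 |].
    apply OmegaD_plane_nbhd; assumption. }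
  assert (Hchain : coord (opartial m f x) c * (- (b * coord I n))
                    + coord (opartial n f x) c * (b * coord I m)
    = coord (omul (osub (oscale (coord I m) (ebasis n)) (oscale (coord I n) (ebasis m)))
                  (F2 a b)) c).
  { apply (uniqueness_limite (fun t => coord (f (plane x m n (p t) (q t))) c) 0).
    - exact (derivable_pt_lim_comp_2d _ p q 0 _ _ _ _ Hdiff Hp Hq).
    - apply is_derive_Reals.
      apply (is_derive_ext (fun t => coord (f (oadd (oreal a) (oscale b (rotation I m n t)))) c)).
      + intro t. rewrite slice_rotation_plane. reflexivity.
      + apply (is_derive_slice_rotation D f F1); assumption. }
  rewrite omul_osubl, !omul_oscalel, coord_osub, !coord_oscale in Hchain.
  unfold Lop. rewrite omul_oscaler, omul_osubl, !omul_oscalel.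
  rewrite !coord_oscale, !coord_osub, !coord_oscale, !Hx by lia.
  transitivity (coord (opartial m f x) c * (- (b * coord I n))
                + coord (opartial n f x) c * (b * coord I m));
    [ring | rewrite Hchain; field; exact Hb].
Qed.

Lemma Gamma_of_Lop_rotational f x G :
  (forall m n, (0 < m)%nat -> (m < n)%nat -> (n < 8)%nat ->
     Lop m n f x
     = omul (osub (oscale (coord x m) (ebasis n)) (oscale (coord x n) (ebasis m))) G) ->
  Gamma f x = oscale 6 (omul (oIm x) G).
Proof.
  intro HL. unfold Gamma.
  (* alternativity and the Moufang identity give e_m (e_n ((x_m e_n - x_n e_m) G))
     = - (x_m e_m + x_n e_n) G, and each index lies in six of the pairs m < n *)
  transitivity (oopp (osum 8 (fun m => osum 8 (fun n =>
    if (Nat.ltb 0 m && Nat.ltb m n)%bool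
    then emul m (emul n (osub (oscale (coord x m) (emul n G)) (oscale (coord x n) (emul m G))))
    else oreal 0)))).
  - apply f_equal, osum_ext; intros m Hm; apply osum_ext; intros n Hn.
    destruct (Nat.ltb_spec 0 m), (Nat.ltb_spec m n); cbn [andb]; try reflexivity.
    rewrite HL, omul_osubl, !omul_oscalel, !omul_ebasis_l by lia. reflexivity.
  - oct_ring.
Qed.

Lemma oIm_slice a b I : coord I 0 = 0 -> oIm (oadd (oreal a) (oscale b I)) = oscale b I.
Proof.
  intro HI0. apply oct_ext; intros h Hh. unfold oIm.
  rewrite coord_of_coords, coord_oadd, coord_oreal, !coord_oscale by exact Hh.
  destruct (Nat.eqb_spec h 0); [subst; rewrite HI0 |]; ring.
Qed.

Theorem lemma2p12 (D : R -> R -> Prop) (f : oct -> oct) :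
  (exists a b, D a b) -> openR2 D -> (forall a b, D a b -> D a (- b)) ->
  connectedO (OmegaD D) ->
  is_slice D f -> C1_on (OmegaD D) f ->
  forall F1 F2 : R -> R -> oct, stem_of D f F1 F2 ->
  forall (a b : R) (I : oct), D a b -> sphereS I -> b <> 0 ->
    let x := oadd (oreal a) (oscale b I) in
    oscale (/ b) (F2 a b) = oscale (/ 6) (omul (oinv (oIm x)) (Gamma f x)).
Proof.
  intros _ Hop Hsym _ _ HC1 F1 F2 Hstem a b I HD HI Hb x.
  pose proof HI as [HI0 HI1]%sphereS_iff.
  rewrite (Gamma_of_Lop_rotational f x (oscale (/ b) (F2 a b))).
  - rewrite omul_oscaler, omul_oinv_omul, oscale_oscale.
    + apply oct_ext; intros; rewrite !coord_oscale; field; exact Hb.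
    + unfold x. rewrite oIm_slice, onorm2_oscale, HI1 by exact HI0.
      rewrite Rmult_1_r. apply pow_nonzero, Hb.
  - intros m n Hm Hmn Hn. apply (Lop_slice D f F1); auto; lia.
Qed.
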